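(* Consider the stochastic discrete-time system $x_{k+1}=f(x_k,u_k,w_k)$, $k=0,\dots,N-1$, as described in the context, with a non-random initial state $x_0=x\in\mathcal{X}$, and let $g:\mathcal{X}\to\mathbb{R}$ be any function. For every initial state $x\in\mathcal{X}$ and every confidence level $\alpha\in(0,1]$ there exists a policy $\pi^*\in\Pi$ such that $$\mathrm{CVaR}_\alpha\big[Z^{\pi^*}_x\big]=\inf_{\pi\in\Pi}\mathrm{CVaR}_\alpha\big[Z^{\pi}_x\big]=\min_{\pi\in\Pi}\mathrm{CVaR}_\alpha\big[Z^{\pi}_x\big],$$ where $Z^\pi_x:=\max_{k=0,\dots,N} g(x_k)$ for the state trajectory $(x_0,\dots,x_N)$ generated from $x_0=x$ under $\pi$.
   Context: System: $x_{k+1}=f(x_k,u_k,w_k)$ for $k=0,\dots,N-1$, where $x_k\in\mathcal{X}\subseteq\mathbb{R}^n$, the control space $U$ and the disturbance space $D=\{d_1,\dots,d_W\}$ are finite sets of real vectors, and $f:\mathcal{X}\times U\times D\to\mathcal{X}$ is bounded and Lipschitz continuous. The disturbances $w_0,\dots,w_{N-1}$ are independent of each other and of the states and controls, with $\mathbb{P}[w_k=d_j]=p_j$, $p_j\ge 0$, $\sum_j p_j=1$; they are the only source of randomness (the initial state is deterministic). The policy set is $\Pi:=\{(\mu_0,\dots,\mu_{N-1})\mid \mu_k:H_k\to U\}$, where $H_k=\mathcal{X}^{k+1}$ is the set of state histories $(x_0,\dots,x_k)$, and $u_k=\mu_k(x_0,\dots,x_k)$. For a random variable $Z$ with finite expectation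 and $\alpha\in(0,1]$, $\mathrm{CVaR}_\alpha[Z]:=\min_{t\in\mathbb{R}}\{t+\frac{1}{\alpha}\mathbb{E}[\max\{Z-t,0\}]\}$. *)

From HB Require Import structures.
From mathcomp Require Import all_boot all_order all_algebra.
From mathcomp Require Import all_classical all_reals all_analysis.
Set Implicit Arguments. Unset Strict Implicit. Unset Printing Implicit Defensive.
Import Order.TTheory GRing.Theory Num.Theory.
Import numFieldNormedType.Exports.
Local Open Scope classical_set_scope.
Local Open Scope ring_scope.

Section Sys.
Variables (R : realType) (n m q W N : nat).
Variable f : 'rV[R]_n -> 'rV[R]_m -> 'rV[R]_q -> 'rV[R]_n.
(* disturbance values d_1..d_W and probabilities p_1..p_W *)
Variables (d : 'I_W -> 'rV[R]_q) (p : 'I_W -> R).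

(* A history-dependent policy: pol k maps (x_0,...,x_k) to u_k. *)
Definition policy := forall k : nat, ('I_k.+1 -> 'rV[R]_n) -> 'rV[R]_m.

Definition admissible (U : seq 'rV[R]_m) (pol : policy) :=
  forall k (h : 'I_k.+1 -> 'rV[R]_n), (k < N)%N -> pol k h \in U.

Definition wval (ws : {ffun 'I_N -> 'I_W}) (k : nat) : 'rV[R]_q :=
  if insub k is Some i then d (ws i) else 0.

Fixpoint traj (pol : policy) (x : 'rV[R]_n) (ws : {ffun 'I_N -> 'I_W}) (k : nat)
  : seq 'rV[R]_n :=
  match k with
  | 0 => [:: x]
  | k'.+1 => let s := traj pol x ws k' in
      rcons s (f (last x s) (pol k' (fun i : 'I_k'.+1 => nth x s i)) (wval ws k'))
  end.

Definition Zcost (g : 'rV[R]_n -> R) (pol : policy) (x : 'rV[R]_n)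
  (ws : {ffun 'I_N -> 'I_W}) : R :=
  \big[Num.max/g x]_(k < N.+1) g (nth x (traj pol x ws N) k).

Definition prob (ws : {ffun 'I_N -> 'I_W}) : R := \prod_(k < N) p (ws k).

Definition Expect (Z : {ffun 'I_N -> 'I_W} -> R) : R :=
  \sum_(ws : {ffun 'I_N -> 'I_W}) prob ws * Z ws.

Definition CVaR (alpha : R) (Z : {ffun 'I_N -> 'I_W} -> R) : R :=
  inf [set t + alpha^-1 * Expect (fun ws => Num.max (Z ws - t) 0) | t in [set: R]].

End Sys.

Arguments CVaR {R W} N p alpha Z.
Arguments Zcost {R n m q W} N f d g pol x ws.
Arguments admissible {R n m} N U pol.

From HB Require Import structures.
From mathcomp Require Import all_boot all_order all_algebra.
From mathcomp Require Import all_classical all_reals all_analysis.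
Import Order.TTheory GRing.Theory Num.Theory.
Import numFieldNormedType.Exports.
Local Open Scope classical_set_scope.
Local Open Scope ring_scope.
Set Implicit Arguments. Unset Strict Implicit.

(* Along any disturbance outcome an admissible policy only ever applies
   controls from the finite set U, and there are finitely many outcomes.
   Recording, for every outcome and stage, which element of U is applied
   therefore sorts admissible policies into finitely many classes, and the
   trajectories -- hence Z and its CVaR -- only depend on the class.  So the
   CVaR takes finitely many values over the admissible policies and one of
   them is minimal; no regularity of f, g or the distribution is needed. *)

Lemma exists_minimizer_finite_key (T : Type) (K : finType)
    (disp : Order.disp_t) (O : orderType disp)
    (A : set T) (C : T -> O) (key : T -> K) (a0 : T) :
  A a0 -> (forall a b, A a -> A b -> key a = key b -> C a = C b) ->
  exists2 a, A a & forall b, A b -> (C a <= C b)%O.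
Proof.
move=> Aa0 C_key.
have [rep repP] : {rep : K -> T & forall t,
    (exists2 a, A a & key a = t) -> A (rep t) /\ key (rep t) = t}.
  apply: (choice (P := fun t a =>
    (exists2 a, A a & key a = t) -> A a /\ key a = t)) => t.
  have [[a Aa <-]|noS] := pselect (exists2 a, A a & key a = t).
    by exists a.
  by exists a0 => /noS.
pose S : pred K := fun t => `[< exists2 a, A a & key a = t >].
have S_key b : A b -> S (key b) by move=> Ab; apply/asboolP; exists b.
case: (arg_minP (C \o rep) (S_key _ Aa0)) => t /asboolP /repP [Art _] t_min.
exists (rep t) => // b Ab.
have /asboolP/repP [Arb krb] := S_key _ Ab.
by rewrite -(C_key _ _ Arb Ab krb); exact: t_min (S_key _ Ab).
Qed.

Lemma inf_eq_min (R : realType) (E : set R) (x : R) :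
  E x -> lbound E x -> inf E = x.
Proof.
move=> Ex lbx; apply/le_anti/andP; split; last by apply: lb_le_inf lbx; exists x.
by apply: ge_inf Ex; exists x.
Qed.

Section ControlledTrajectories.
Variables (R : realType) (n m q W N : nat).
Variable f : 'rV[R]_n -> 'rV[R]_m -> 'rV[R]_q -> 'rV[R]_n.
Variables (d : 'I_W -> 'rV[R]_q) (x : 'rV[R]_n).

Definition history (pol : policy R n m) (ws : {ffun 'I_N -> 'I_W}) (k : nat)
    : 'I_k.+1 -> 'rV[R]_n :=
  fun i => nth x (traj f d pol x ws k) i.
Arguments history pol ws k : clear implicits.

Definition applies_same_controls (pol1 pol2 : policy R n m) :=
  forall ws k, (k < N)%N -> pol1 k (history pol1 ws k) = pol2 k (history pol2 ws k).

Lemma traj_eq_same_controls (pol1 pol2 : policy R n m) (ws : {ffun 'I_N -> 'I_W}) :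
  applies_same_controls pol1 pol2 ->
  forall k, (k <= N)%N -> traj f d pol1 x ws k = traj f d pol2 x ws k.
Proof.
move=> same; elim=> [|k IH] // ltkN /=.
by rewrite [pol1 k _]same // IH // ltnW.
Qed.

Lemma Zcost_eq_same_controls (g : 'rV[R]_n -> R) pol1 pol2 :
  applies_same_controls pol1 pol2 -> Zcost N f d g pol1 x = Zcost N f d g pol2 x.
Proof.
by move=> same; apply/funext => ws; rewrite /Zcost (traj_eq_same_controls ws same).
Qed.

Variable U : seq 'rV[R]_m.

Definition control_code (pol : policy R n m)
    : {ffun {ffun 'I_N -> 'I_W} -> {ffun 'I_N -> 'I_(size U).+1}} :=
  [ffun ws => [ffun k : 'I_N => inord (index (pol k (history pol ws k)) U)]].

Lemma applies_same_controls_code pol1 pol2 :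
  admissible N U pol1 -> admissible N U pol2 ->
  control_code pol1 = control_code pol2 -> applies_same_controls pol1 pol2.
Proof.
move=> adm1 adm2 code12 ws k ltkN.
move/ffunP/(_ ws)/ffunP/(_ (Ordinal ltkN)): code12.
rewrite !ffunE => /(congr1 val); rewrite /= !inordK ?ltnS ?index_size //.
by apply: (index_inj 0 (adm1 k (history pol1 ws k) ltkN) (adm2 k (history pol2 ws k) ltkN)).
Qed.

End ControlledTrajectories.

Theorem lemma1 (R : realType) (n m q W N : nat)
  (X : set 'rV[R]_n) (U : seq 'rV[R]_m)
  (f : 'rV[R]_n -> 'rV[R]_m -> 'rV[R]_q -> 'rV[R]_n)
  (d : 'I_W -> 'rV[R]_q) (p : 'I_W -> R)
  (g : 'rV[R]_n -> R)
  (hU : U != [::])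
  (hfX : forall x u w, X x -> u \in U -> w \in codom d -> X (f x u w))
  (hfbd : exists M : R, forall x u w, X x -> u \in U -> w \in codom d ->
            `|f x u w| <= M)
  (hflip : exists L : R, forall x y u w, X x -> X y -> u \in U -> w \in codom d ->
            `|f x u w - f y u w| <= L * `|x - y|)
  (hp0 : forall j, 0 <= p j) (hp1 : \sum_(j < W) p j = 1)
  (x : 'rV[R]_n) (hx : X x) (alpha : R) (ha0 : 0 < alpha) (ha1 : alpha <= 1) :
  exists pol : policy R n m,
    admissible N U pol /\
    CVaR N p alpha (Zcost N f d g pol x) =
      inf [set CVaR N p alpha (Zcost N f d g pi x) | pi in admissible N U] /\
    (forall pi : policy R n m, admissible N U pi ->
       CVaR N p alpha (Zcost N f d g pol x) <= CVaR N p alpha (Zcost N f d g pi x)).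
Proof.
pose C pol := CVaR N p alpha (Zcost N f d g pol x).
pose pol0 : policy R n m := fun _ _ => head 0 U.
have adm0 : admissible N U pol0.
  by move=> k h _; rewrite /pol0 -nth0 mem_nth // lt0n size_eq0.
have C_code pi1 pi2 : admissible N U pi1 -> admissible N U pi2 ->
    control_code N f d x U pi1 = control_code N f d x U pi2 -> C pi1 = C pi2.
  move=> adm1 adm2 /(applies_same_controls_code adm1 adm2) same.
  by rewrite /C (Zcost_eq_same_controls g same).
have [pol adm_pol pol_min] := exists_minimizer_finite_key adm0 C_code.
exists pol; split=> //; split=> //.
apply/esym/inf_eq_min; first by exists pol.
by move=> _ [pi adm_pi <-]; exact: pol_min.
Qed.
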